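(* Let $\mathbf{k}$ be an algebraically closed field of characteristic zero, $\mathcal{A}=\mathbf{k}[x_1,\ldots,x_n]$, and let $\mathcal{L}_+$ be the Lie algebra of polynomial vector fields on $\mathbb{A}^n$ vanishing at the origin. Let $U$ be a finite-dimensional $\mathbf{k}$-vector space and let $\rho$ be an $\mathcal{A}$-linear representation of $\mathcal{L}_+$ on $\mathcal{A}\otimes_{\mathbf{k}}U$. Then for each $i\in\{1,\ldots,n\}$ there are only finitely many $k\in\mathbb{Z}^n_{\geq0}\setminus\{0\}$ for which $\rho\left(x^k\frac{\partial}{\partial x_i}\right)\neq 0$.
   Context: $\mathcal{L}_+$ is spanned by $x^k\frac{\partial}{\partial x_i}$ with $k\in\mathbb{Z}^n_{\ge0}\setminus\{0\}$, where $x^k=x_1^{k_1}\cdots x_n^{k_n}$. An $\mathcal{A}$-linear representation of $\mathcal{L}_+$ on $\mathcal{A}\otimes U$ is a Lie algebra homomorphism $\rho:\mathcal{L}_+\to\mathrm{End}_{\mathcal{A}}(\mathcal{A}\otimes U)$. *)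

From HB Require Import structures.
From mathcomp Require Import all_boot all_order all_algebra.
From mathcomp Require Import mpoly.
Set Implicit Arguments. Unset Strict Implicit. Unset Printing Implicit Defensive.
Import GRing.Theory.
Local Open Scope ring_scope.

(* Polynomial vector fields on A^n over k: X = sum_i X_i d/dx_i, encoded as
   the row vector (X_0, ..., X_{n-1}) of coefficients in A = k[x_1..x_n]. *)
Definition vfield (k : fieldType) (n : nat) := 'rV[{mpoly k[n]}]_n.

Definition vf_bracket (k : fieldType) (n : nat) (X Y : vfield k n) : vfield k n :=
  \row_(j < n) \sum_(i < n)
     (X 0 i * (Y 0 j)^`M(i) - Y 0 i * (X 0 j)^`M(i)).

Definition in_Lplus (k : fieldType) (n : nat) (X : vfield k n) : Prop :=
  forall i : 'I_n, (X 0 i)@_(0%MM) = 0.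

Definition xd (k : fieldType) (n : nat) (m : 'X_{1..n}) (i : 'I_n) : vfield k n :=
  \row_(j < n) (if j == i then 'X_[m] else 0).

(* An A-linear representation of L_+ on A (x) U, with dim U = d, identifying
   End_A(A (x) U) with d x d matrices over A (via a k-basis of U): a k-linear
   map on L_+ sending brackets to commutators. *)
Definition Alin_rep (k : fieldType) (n d : nat)
    (rho : vfield k n -> 'M[{mpoly k[n]}]_d) : Prop :=
  (forall (a : k) (X Y : vfield k n), in_Lplus X -> in_Lplus Y ->
      rho (a%:MP *: X + Y) = a%:MP *: rho X + rho Y) /\
  (forall X Y : vfield k n, in_Lplus X -> in_Lplus Y ->
      rho (vf_bracket X Y) = rho X *m rho Y - rho Y *m rho X).

From HB Require Import structures.
From mathcomp Require Import all_boot all_order all_algebra.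
From mathcomp Require Import mpoly.
From Stdlib Require Import Classical.
Set Implicit Arguments. Unset Strict Implicit. Unset Printing Implicit Defensive.
Import GRing.Theory.
Local Open Scope ring_scope.

(* The Euler field E = sum_j x_j d/dx_j acts on x^m d/dx_i by the scalar
   |m| - 1, hence rho(x^m d/dx_i) is an eigenvector, with eigenvalue |m| - 1,
   of the commutator map M |-> rho(E) M - M rho(E) on d x d matrices over A.
   That map is a d^2 x d^2 matrix over the domain A, so its characteristic
   polynomial has at most d^2 roots; in characteristic zero the constants
   |m| - 1 are pairwise distinct, so |m| is bounded whenever
   rho(x^m d/dx_i) <> 0, and there are finitely many such monomials. *)

Lemma bounded_nat_pred (P : pred nat) (N : nat) :
  (forall s, uniq s -> all P s -> (size s <= N)%N) ->
  exists B, forall j, P j -> (j <= B)%N.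
Proof.
elim: N P => [|N IH] P sizeP.
  by exists 0%N => j Pj; have := sizeP [:: j]; rewrite /= Pj => /(_ isT isT).
have [[j0 Pj0]|noP] := classic (exists j, P j); last first.
  by exists 0%N => j Pj; case: noP; exists j.
have [|B boundB] := IH [pred j | P j && (j != j0)].
  move=> s s_uniq sP; rewrite -ltnS; apply: (sizeP (j0 :: s)).
    by rewrite /= s_uniq andbT; apply/negP => /(allP sP) /=; rewrite eqxx andbF.
  by rewrite /= Pj0; apply/allP => x /(allP sP) /andP[].
exists (maxn B j0) => j Pj; have [->|ne] := eqVneq j j0; first exact: leq_maxr.
by rewrite leq_max boundB ?inE ?Pj ?ne.
Qed.

Lemma bounded_roots_inj (R : idomainType) (p : {poly R}) (f : nat -> R) :
  p != 0 -> injective f -> exists B, forall j, root p (f j) -> (j <= B)%N.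
Proof.
move=> p0 f_inj; apply: (@bounded_nat_pred _ (size p).-1) => s s_uniq s_roots.
rewrite -ltnS prednK ?size_poly_gt0 // -(size_map f).
apply: max_poly_roots p0 _ _; last by rewrite map_inj_uniq.
by apply/allP => _ /mapP[j js ->]; exact: (allP s_roots).
Qed.

Lemma pchar0_natr_inj (R : idomainType) :
  [pchar R] =i pred0 -> injective (fun j : nat => j%:R : R).
Proof.
move=> /GRing.pcharf0P natr_eq0.
suff le_natr_inj j1 j2 : (j1 <= j2)%N -> j1%:R = j2%:R :> R -> j1 = j2.
  by move=> j1 j2; case: (leqP j1 j2) => [|/ltnW] le e; [|symmetry];
     apply: le_natr_inj => //.
move=> le e; have := natr_eq0 (j2 - j1)%N.
by rewrite natrB // e subrr eqxx subn_eq0 => /esym le'; apply/eqP; rewrite eqn_leq le.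
Qed.

Lemma horner_char_poly (R : comNzRingType) (N : nat) (A : 'M[R]_N) (a : R) :
  (char_poly A).[a] = \det (a%:M - A).
Proof.
symmetry; rewrite horner_sum; apply: eq_bigr => s _.
rewrite hornerM horner_exp !hornerE; congr (_ * _).
rewrite (big_morph _ (fun p q => hornerM p q a) (hornerC 1 a)).
by apply: eq_bigr => i _; rewrite !mxE !(hornerE, hornerMn).
Qed.

Lemma eigenvector_root_char_poly (R : idomainType) (N : nat) (L : 'M[R]_N)
    (v : 'rV[R]_N) (a : R) :
  v != 0 -> v *m L = a *: v -> root (char_poly L) a.
Proof.
move=> v0 vL; have ker_v : v *m (a%:M - L) = 0.
  by rewrite mulmxBr mul_mx_scalar vL subrr.
have : \det (a%:M - L) *: v = 0.
  by rewrite -mul_mx_scalar -mul_mx_adj mulmxA ker_v mul0mx.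
by move/eqP; rewrite scalemx_eq0 (negbTE v0) orbF rootE horner_char_poly.
Qed.

Definition ad_mx (R : comNzRingType) (d : nat) (A : 'M[R]_d) : 'M[R]_(d * d) :=
  lin_mulmx A - lin_mulmxr A.

Lemma mxvec_ad_mx (R : comNzRingType) (d : nat) (A M : 'M[R]_d) :
  mxvec M *m ad_mx A = mxvec (A *m M - M *m A).
Proof. by rewrite mulmxBr !mul_vec_lin linearB. Qed.

Lemma root_char_poly_ad_mx (R : idomainType) (d : nat) (A M : 'M[R]_d) (a : R) :
  M != 0 -> A *m M - M *m A = a *: M -> root (char_poly (ad_mx A)) a.
Proof.
move=> M0 AM; apply: (@eigenvector_root_char_poly _ _ _ (mxvec M)).
  by rewrite mxvec_eq0.
by rewrite mxvec_ad_mx AM linearZ.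
Qed.

Lemma mdeg_bounded_finite (n B : nat) :
  exists s : seq 'X_{1..n}, forall m, (mdeg m <= B)%N -> m \in s.
Proof.
exists (map val (enum [set: 'X_{1..n < B.+1}])) => m degm.
by apply/mapP; exists (BMultinom (degm : mdeg m < B.+1)%N); rewrite ?mem_enum ?inE.
Qed.

Section VectorFields.

Variables (k : fieldType) (n : nat).

Definition euler : vfield k n := \row_(j < n) 'X_j.

Lemma mderivX1 (i j : 'I_n) : ('X_j : {mpoly k[n]})^`M(i) = (j == i)%:R.
Proof.
rewrite mderivX mnm1E; case: eqP => [->|_]; last by rewrite scale0r.
have -> : (U_(i) - U_(i))%MM = 0%MM by apply/mnmP=> l; rewrite mnmBE subnn mnm0E.
by rewrite mpolyX0 scale1r.
Qed.

Lemma mulX_mderivX (m : 'X_{1..n}) (l : 'I_n) :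
  ('X_l : {mpoly k[n]}) * ('X_[m])^`M(l) = 'X_[m] *+ m l.
Proof.
rewrite mderivX -scalerAr -mpolyXD scaler_nat.
have [->|nz] := eqVneq (m l) 0%N; first by rewrite !mulr0n.
by rewrite addmC submK // lep1mP.
Qed.

Lemma vf_bracket_euler_xd (m : 'X_{1..n}) (i : 'I_n) :
  vf_bracket euler (xd k m i) = ((mdeg m)%:R - 1 : k)%:MP *: xd k m i.
Proof.
apply/matrixP => a j; rewrite !mxE.
under eq_bigr => l _ do rewrite !mxE.
rewrite sumrB [X in _ - X](bigD1 i) //= [X in _ - (_ + X)]big1; last first.
  by move=> l /negbTE ->; rewrite mul0r.
rewrite eqxx addr0 mderivX1.
have [e|ne] := eqVneq j i; last first.
  by rewrite mulr0 subr0 mulr0 big1 // => l _; rewrite mderiv0 mulr0.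
subst j; under eq_bigr => l _ do rewrite mulX_mderivX.
by rewrite mulr1 sumrMnr -mdegE rmorphB /= mpolyC_nat mpolyC1 mulrBl mul1r mulr_natl.
Qed.

Lemma in_Lplus0 : in_Lplus (0 : vfield k n).
Proof. by move=> j; rewrite mxE mcoeff0. Qed.

Lemma in_Lplus_euler : in_Lplus euler.
Proof. by move=> j; rewrite mxE mcoeffX mnm1_eq0. Qed.

Lemma in_Lplus_xd (m : 'X_{1..n}) (i : 'I_n) : m != 0%MM -> in_Lplus (xd k m i).
Proof.
move=> m0 j; rewrite mxE; case: (j == i); last by rewrite mcoeff0.
by rewrite mcoeffX (negbTE m0).
Qed.

End VectorFields.

Section Representation.

Variables (k : fieldType) (n d : nat) (rho : vfield k n -> 'M[{mpoly k[n]}]_d).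
Hypothesis rho_rep : Alin_rep rho.

Lemma Alin_rep0 : rho 0 = 0.
Proof.
have := rho_rep.1 1 0 0 (@in_Lplus0 k n) (@in_Lplus0 k n).
by rewrite mpolyC1 !scale1r addr0 => e; apply: (addrI (rho 0)); rewrite addr0 -e.
Qed.

Lemma Alin_repZ (a : k) (X : vfield k n) :
  in_Lplus X -> rho (a%:MP *: X) = a%:MP *: rho X.
Proof.
move=> LX; have := rho_rep.1 a X 0 LX (@in_Lplus0 k n).
by rewrite !addr0 Alin_rep0 addr0.
Qed.

Lemma Alin_rep_euler_xd (m : 'X_{1..n}) (i : 'I_n) : m != 0%MM ->
  rho (euler k n) *m rho (xd k m i) - rho (xd k m i) *m rho (euler k n) =
  ((mdeg m)%:R - 1 : k)%:MP *: rho (xd k m i).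
Proof.
move=> m0; have LE := @in_Lplus_euler k n; have LM := in_Lplus_xd k i m0.
by rewrite -rho_rep.2 // vf_bracket_euler_xd Alin_repZ.
Qed.

End Representation.

Theorem lemma5p2 (k : closedFieldType) (pchar0 : [pchar k] =i pred0)
    (n d : nat) (rho : vfield k n -> 'M[{mpoly k[n]}]_d) :
  Alin_rep rho ->
  forall i : 'I_n, exists s : seq 'X_{1..n},
    forall m : 'X_{1..n}, m != 0%MM -> rho (@xd k n m i) != 0 -> m \in s.
Proof.
move=> rho_rep i.
pose A := ad_mx (rho (euler k n)).
have shift_inj : injective (fun j : nat => ((j%:R - 1 : k)%:MP : {mpoly k[n]})).
  by move=> j1 j2 /eqP; rewrite mpolyC_eq => /eqP /addIr /(pchar0_natr_inj pchar0).
have [B rootsA_le] := bounded_roots_inj (monic_neq0 (char_poly_monic A)) shift_inj.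
have [s degs] := mdeg_bounded_finite n B.
exists s => m m0 rho_m0; apply/degs/rootsA_le.
exact: root_char_poly_ad_mx rho_m0 (Alin_rep_euler_xd rho_rep i m0).
Qed.
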